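(* Let $0<\varepsilon<1$. Let $\mathcal C'$ be any clustering of $V$ that does not split any atom of $\mathcal K$ and such that for every $u\in V$ and every $C\in\mathcal C'$ with $K_u\subsetneq C$ we have $w(u,C)>\frac{|C|}{2}+\varepsilon w_u$. Then for every $C\in\mathcal C'$ and every $u,v\in C$, $w_u>\varepsilon w_v$.
   Context: A Correlation Clustering instance consists of a finite vertex set $V$ and a partition $E^+\uplus E^-=\binom V2$ of unordered pairs of distinct vertices into $+$edges and $-$edges. $\mathcal K$ is a partition of $V$ into atoms, and every pair of distinct vertices in a common atom is a $+$edge. For $u\in V$, $K_u$ is the atom containing $u$ and $k_u=|K_u|$. For $u,v\in V$ (possibly equal), $w_{uv}=\frac1{k_uk_v}\sum_{u'\in K_u,v'\in K_v}\mathbf 1[u'v'\text{ is a }+\text{edge or }u'=v']\in[0,1]$; for $V'\subseteq V$, $w(u,V')=\sum_{v\in V'}w_{uv}$, and $w_u=w(u,V)$. *)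

From HB Require Import structures.
From mathcomp Require Import all_boot all_order all_algebra.
Set Implicit Arguments. Unset Strict Implicit. Unset Printing Implicit Defensive.
Import Order.TTheory GRing.Theory Num.Theory.
Local Open Scope ring_scope.

Section CC.
Variables (R : realFieldType) (V : finType).
(* E = the +edges (a symmetric relation on V); K = the atom partition. *)
Variables (E : rel V) (K : {set {set V}}).

Definition atom (u : V) : {set V} := pblock K u.

Definition wt (u v : V) : R :=
  (#|atom u| * #|atom v|)%:R^-1 *
  \sum_(u' in atom u) \sum_(v' in atom v) ((E u' v' || (u' == v')) : nat)%:R.

Definition wset (u : V) (S : {set V}) : R := \sum_(v in S) wt u v.

Definition wdeg (u : V) : R := wset u [set: V].
End CC.

From HB Require Import structures.
From mathcomp Require Import all_boot all_order all_algebra lra.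
Import Order.TTheory GRing.Theory Num.Theory.
Local Open Scope ring_scope.

(* If u and v share an atom then w_u = w_v > 0 and eps < 1 suffice. Otherwise
   both atoms are proper subsets of C, so the density condition applies to both:
   since w(v, C) <= |C|, it forces eps w_v < |C|/2, while w_u >= w(u, C) > |C|/2. *)

Lemma pblock_sub_coarser {T : finType} {P Q : {set {set T}}} {D B : {set T}} {x : T} :
  partition P D -> trivIset Q ->
  (forall A, A \in P -> exists2 B', B' \in Q & A \subset B') ->
  B \in Q -> x \in B -> x \in D -> pblock P x \subset B.
Proof.
move=> pP tQ refPQ BQ xB xD.
have xPx : x \in pblock P x by rewrite mem_pblock (cover_partition pP).
have [B' B'Q sPB'] : exists2 B', B' \in Q & pblock P x \subset B'.
  by apply: refPQ; rewrite pblock_mem // (cover_partition pP).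
have -> : B = B'.
  by rewrite -(def_pblock tQ BQ xB) (def_pblock tQ B'Q (subsetP sPB' _ xPx)).
exact: sPB'.
Qed.

Lemma pblock_proper_coarser {T : finType} {P Q : {set {set T}}} {D B : {set T}}
    {x y : T} :
  partition P D -> trivIset Q ->
  (forall A, A \in P -> exists2 B', B' \in Q & A \subset B') ->
  B \in Q -> x \in B -> y \in B -> x \in D -> pblock P x != pblock P y ->
  pblock P x \proper B.
Proof.
move=> pP tQ refPQ BQ xB yB xD Pxy.
rewrite properEneq (pblock_sub_coarser pP tQ refPQ) // andbT.
apply: contra_neq Pxy => PxB; symmetry.
by apply: same_pblock; [case/and3P: pP | rewrite PxB].
Qed.

Section Weights.
Context {R : realFieldType} {V : finType} {E : rel V} {K : {set {set V}}}.

Lemma wt_ge0 u v : 0 <= wt R E K u v.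
Proof.
rewrite /wt mulr_ge0 ?invr_ge0 ?ler0n //.
by apply: sumr_ge0 => i _; apply: sumr_ge0 => j _; rewrite ler0n.
Qed.

Lemma wset_le_wdeg u C : wset R E K u C <= wdeg R E K u.
Proof.
rewrite /wdeg /wset [X in _ <= X](bigID [in C]) /=.
rewrite [X in _ <= X + _](eq_bigl [in C]); last by move=> i; rewrite inE.
by rewrite lerDl; apply: sumr_ge0 => i _; apply: wt_ge0.
Qed.

Lemma eq_atom_wdeg u v : atom K u = atom K v -> wdeg R E K u = wdeg R E K v.
Proof. by move=> Kuv; apply: eq_bigr => x _; rewrite /wt Kuv. Qed.

Hypothesis pK : partition K [set: V].

Lemma mem_atom u : u \in atom K u.
Proof. by rewrite mem_pblock (cover_partition pK) inE. Qed.

Lemma card_atom_gt0 u : (0 < #|atom K u|)%N.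
Proof. by apply/card_gt0P; exists u; apply: mem_atom. Qed.

Lemma wt_le1 u v : wt R E K u v <= 1.
Proof.
rewrite /wt ler_pdivrMl ?ltr0n ?muln_gt0 ?card_atom_gt0 // mulr1.
rewrite -!sum1_card natrM !natr_sum mulr_suml.
apply: ler_sum => i _; rewrite mul1r; apply: ler_sum => j _.
by rewrite lern1 leq_b1.
Qed.

Lemma wt_gt0_id u : 0 < wt R E K u u.
Proof.
rewrite /wt mulr_gt0 ?invr_gt0 ?ltr0n ?muln_gt0 ?card_atom_gt0 //.
rewrite (bigD1 u) ?mem_atom //= (bigD1 u) ?mem_atom //= eqxx orbT.
rewrite -addrA ltr_pwDl ?ltr01 // addr_ge0 //.
  by apply: sumr_ge0 => j _; rewrite ler0n.
by apply: sumr_ge0 => i _; apply: sumr_ge0 => j _; rewrite ler0n.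
Qed.

Lemma wdeg_gt0 u : 0 < wdeg R E K u.
Proof.
rewrite /wdeg /wset (bigD1 u) //= ltr_pwDl ?wt_gt0_id //.
by apply: sumr_ge0 => i _; apply: wt_ge0.
Qed.

Lemma wset_le_card u C : wset R E K u C <= #|C|%:R.
Proof.
rewrite -sum1_card natr_sum.
by apply: ler_sum => i _; apply: wt_le1.
Qed.

Lemma wdeg_gt_of_dense {eps : R} {u v : V} {C : {set V}} : 0 <= eps ->
  wset R E K u C > #|C|%:R / 2 + eps * wdeg R E K u ->
  wset R E K v C > #|C|%:R / 2 + eps * wdeg R E K v ->
  wdeg R E K u > eps * wdeg R E K v.
Proof.
move=> eps_ge0 dense_u dense_v.
have := wset_le_wdeg u C; have := wset_le_card v C.
have : 0 <= eps * wdeg R E K u by rewrite mulr_ge0 // ltW ?wdeg_gt0.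
lra.
Qed.

End Weights.

Theorem lemma10 (R : realFieldType) (V : finType) (E : rel V)
    (K C' : {set {set V}}) (eps : R) :
  0 < eps < 1 ->
  symmetric E ->
  partition K [set: V] ->
  (forall A, A \in K -> forall x y, x \in A -> y \in A -> x != y -> E x y) ->
  partition C' [set: V] ->
  (forall A, A \in K -> exists2 C, C \in C' & A \subset C) ->
  (forall (u : V) (C : {set V}), C \in C' -> atom K u \proper C ->
      wset R E K u C > #|C|%:R / 2 + eps * wdeg R E K u) ->
  forall (C : {set V}) (u v : V), C \in C' -> u \in C -> v \in C ->
    wdeg R E K u > eps * wdeg R E K v.
Proof.
move=> /andP[eps_gt0 eps_lt1] _ pK _ pC refKC' dense C u v CC' uC vC.
have [Kuv | Kuv] := eqVneq (atom K u) (atom K v).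
  by rewrite (eq_atom_wdeg _ _ Kuv) gtr_pMl ?wdeg_gt0.
have tC' : trivIset C' by case/and3P: pC.
have proper_atom x y : x \in C -> y \in C -> atom K x != atom K y ->
    atom K x \proper C.
  by move=> xC yC; apply: (pblock_proper_coarser pK tC' refKC' CC'); rewrite ?inE.
apply: (wdeg_gt_of_dense (C := C) pK (ltW eps_gt0)); apply: (dense _ _ CC').
- exact: proper_atom uC vC Kuv.
- by apply: proper_atom vC uC _; rewrite eq_sym.
Qed.
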